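(* Let $L=\prod_{i=1}^m p_i^{r_i}$ be an odd integer, where $p_1<p_2<\dots<p_m$ are distinct primes and each $r_i\ge1$. There exists an equi-difference code $\mathcal{C}\in\mathsf{CAC}(L,3)$ whose leave $\Lambda$ has size $2$ with $\Lambda\ne\{L/3,2L/3\}$ if one of the following holds: (a) $p_1>3$, and every $p_i$ satisfies condition (★) except exactly one index $t$, for which $c_{p_t}=(p_t-1)/2$ and $r_t=1$; (b) $p_1=3$, $r_1=1$, and every $p_i$ with $i\ge2$ satisfies condition (★) except exactly one index $t\ge2$, for which $c_{p_t}=e_{p_t}=(p_t-1)/2$ and $r_t=1$; (c) $p_1=3$, $r_1=2$, and every $p_i$ with $i\ge2$ satisfies condition (★). Here a prime $p$ satisfies condition (★) if $p\equiv5\pmod 8$, or $p\equiv1\pmod8$ and $4\mid e_p$.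
   Context: $\mathcal{P}(L,\omega)$ is the set of $\omega$-element subsets of $\mathbb{Z}_L$. For $\mathcal{I}\in\mathcal{P}(L,\omega)$: $d(\mathcal{I})=\{a-b \bmod L: a,b\in\mathcal{I}\}$, $d^*(\mathcal{I})=d(\mathcal{I})\setminus\{0\}$. A conflict-avoiding code (CAC) of length $L$ and weight $\omega$ is a set $\mathcal{C}\subseteq\mathcal{P}(L,\omega)$ with $d^*(\mathcal{I})\cap d^*(\mathcal{J})=\emptyset$ for all distinct $\mathcal{I},\mathcal{J}\in\mathcal{C}$; $\mathsf{CAC}(L,\omega)$ is the class of these codes. A code is equi-difference if each codeword has the form $\{0,g,2g,\dots,(\omega-1)g\}$ (mod $L$). The leave of $\mathcal{C}$ is $\Lambda=\mathbb{Z}_L\setminus\bigcup_{\mathcal{I}\in\mathcal{C}}d(\mathcal{I})$. For odd $n>2$, $e_n$ is the multiplicative order of $2$ modulo $n$ (least $e\ge1$ with $2^e\equiv1\pmod n$) and $c_n$ is the least $c\ge1$ with $2^c\equiv\pm1\pmod n$ (the multiplicative suborder). *)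

From mathcomp Require Import all_boot.
Set Implicit Arguments. Unset Strict Implicit. Unset Printing Implicit Defensive.

(* Z_L is represented by 'I_L (residues 0..L-1); arithmetic is nat arithmetic mod L. *)

Definition in_diff (L : nat) (I : {set 'I_L}) (x : nat) : bool :=
  [exists a in I, [exists b in I, ((a + (L - b)) %% L == x)]].

Definition in_P (L w : nat) (I : {set 'I_L}) : bool := #|I| == w.

Definition is_CAC (L w : nat) (C : {set {set 'I_L}}) : Prop :=
  (forall I, I \in C -> in_P w I) /\
  (forall I J, I \in C -> J \in C -> I != J ->
     forall x, x < L -> 0 < x -> ~~ (in_diff I x && in_diff J x)).

Definition equi_difference (L w : nat) (C : {set {set 'I_L}}) : Prop :=
  forall I, I \in C -> exists g : nat,
    I = [set i : 'I_L | [exists k : 'I_w, val i == (k * g) %% L]].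

Definition leave (L : nat) (C : {set {set 'I_L}}) : {set 'I_L} :=
  [set x : 'I_L | [forall I in C, ~~ in_diff I x]].

(* e_n: multiplicative order of 2 mod n (least e >= 1 with 2^e = 1 mod n);
   the search over 1..n is exhaustive for odd n > 2 since e_n <= n - 1. *)
Definition ord2 (n : nat) : nat :=
  (find (fun e => 2 ^ e %% n == 1 %% n) (iota 1 n)).+1.

(* c_n: least c >= 1 with 2^c = +-1 mod n (again the search over 1..n suffices). *)
Definition subord2 (n : nat) : nat :=
  (find (fun c => (2 ^ c %% n == 1 %% n) || (2 ^ c %% n == n - 1)) (iota 1 n)).+1.

Definition star (p : nat) : bool :=
  (p %% 8 == 5) || ((p %% 8 == 1) && (4 %| ord2 p)).

From mathcomp Require Import all_boot all_order all_algebra.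
From mathcomp Require Import zify.
From mathcomp Require cyclic.
Set Implicit Arguments. Unset Strict Implicit. Unset Printing Implicit Defensive.
Import GRing.Theory.

(* The codewords are {0, g, 2g}, with nonzero differences ±g, ±2g, so a code is a set of
   generators g whose sets {±g, ±2g} are disjoint, and its leave is what they miss.
   Let n0 be the exceptional prime p_t in cases (a) and (b), and 9 in case (c), and put
   v = L/n0.  Modulo n0 every unit is ±2^k for a unique k < c, with c odd, so the residues
   x with gcd(x, L) = v are the ±2^k v (k < c): the generators 2^i v, i odd, cover all of
   them except ±v, which is the leave.  The residues with 3x = 0 satisfy 2x = -x and are
   covered by {±x}.  For any other x, if 2^k x = ±x with k odd then L/gcd(x, L) divides
   2^k ∓ 1; since the primes satisfying (★) divide no 2^k ∓ 1 with k odd, this forces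
   L/gcd(x, L) to be 1, 3 or n0, which is excluded.  Hence the orbit of x under y ↦ ±2y
   has even length, and every second element of it is taken as a generator. *)

(** * Powers of 2 modulo a prime *)

Lemma find_iota1_min (P : pred nat) n j : 0 < j <= n -> P j ->
  let c := (find P (iota 1 n)).+1 in
  [/\ c <= j, P c & forall i, 0 < i < c -> ~~ P i].
Proof.
move=> /andP[j0 jn] Pj c.
have before i : i < find P (iota 1 n) -> ~~ P i.+1.
  move=> lt; have := before_find 0 lt; have := find_size P (iota 1 n); rewrite size_iota => fs.
  by rewrite nth_iota ?add1n //; lia.
have cj : c <= j.
  rewrite leqNgt; apply/negP => lt.
  by have := before j.-1 ltac:(rewrite /c in lt; lia); rewrite prednK // Pj.
split => //; last by move=> [|i] //= ic; apply: before.
have hasP : has P (iota 1 n) by apply/hasP; exists j => //; rewrite mem_iota; lia.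
have := nth_find 0 hasP; rewrite nth_iota ?add1n //.
by move: hasP; rewrite has_find size_iota.
Qed.

Lemma perm_eq_gauss h :
  perm_eq [seq if j <= h./2 then j.*2 else (h.*2.+1 - j.*2)%N | j <- index_iota 1 h.+1]
          (index_iota 1 h.+1).
Proof.
set s := map _ _.
have s_uniq : uniq s.
  rewrite map_inj_in_uniq ?iota_uniq // => a b.
  rewrite !mem_index_iota => /andP[a1 a2] /andP[b1 b2].
  by case: ifP => ha; case: ifP => hb; lia.
have s_sub : {subset s <= index_iota 1 h.+1}.
  move=> y /mapP[j]; rewrite !mem_index_iota => /andP[j1 j2] ->.
  by case: ifP => hj; lia.
apply: uniq_perm => //; first exact: iota_uniq.
by have [] := uniq_min_size s_uniq s_sub (eq_leq (esym (size_map _ _))).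
Qed.

Section ZpNat.
Local Open Scope ring_scope.
Variable n : nat.
Hypothesis n_gt1 : (1 < n)%N.

Lemma Zp_natE a b : ((a%:R : 'Z_n) == b%:R) = (a == b %[mod n])%N.
Proof. by rewrite -val_eqE /= !val_Zp_nat. Qed.

Lemma Zp_nat_eq0 a : ((a%:R : 'Z_n) == 0) = (n %| a)%N.
Proof. by rewrite -[0]/(0%:R) Zp_natE // mod0n. Qed.

Lemma Zp_natN a b : ((a%:R : 'Z_n) == - b%:R) = (n %| a + b)%N.
Proof. by rewrite -Zp_nat_eq0 natrD -subr_eq0 opprK. Qed.

Lemma Zp_exp2_totient : odd n -> (2%:R : 'Z_n) ^+ totient n = 1.
Proof.
move=> n_odd; apply/eqP; rewrite -natrX -[1]/(1%:R) Zp_natE.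
by apply/eqP/cyclic.Euler_exp_totient; rewrite coprime2n.
Qed.

End ZpNat.

Section Pow2ModPrime.
Local Open Scope ring_scope.
Variable p : nat.
Hypotheses (p_pr : prime p) (p_odd : odd p).
Local Notation two := (2%:R : 'Z_p).
Let p_gt1 : (1 < p)%N := prime_gt1 p_pr.

Lemma Zp_oneN1 : (1 : 'Z_p) != -1.
Proof.
rewrite -subr_eq0 opprK -[1 + 1]/(2%:R) Zp_nat_eq0 //.
by apply: contraL p_odd => /(dvdn_leq (isT : (0 < 2)%N)) p_le2; have -> : p = 2%N by lia.
Qed.

Lemma Zp_two_unit : two \is a GRing.unit.
Proof. by rewrite unitZpE // coprime_sym coprime2n. Qed.

Lemma exp2_eq1 k : (two ^+ k == 1) = (p %| 2 ^ k - 1)%N.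
Proof. by rewrite -natrX -[1]/(1%:R) Zp_natE // eqn_mod_dvd // expn_gt0. Qed.

Lemma exp2_eqN1 k : (two ^+ k == -1) = (p %| 2 ^ k + 1)%N.
Proof. by rewrite -natrX -[X in _ == - X]/(1%:R) Zp_natN. Qed.

Let exp2_mod_eq1 k : (2 ^ k %% p == 1 %% p)%N = (two ^+ k == 1).
Proof. by rewrite -natrX -[1]/(1%:R) Zp_natE. Qed.

Let exp2_mod_eqN1 k : (2 ^ k %% p == p - 1)%N = (two ^+ k == -1).
Proof.
have -> : (-1 : 'Z_p) = (p - 1)%N%:R by rewrite natrB ?pchar_Zp ?sub0r //; lia.
by rewrite -natrX Zp_natE // [((p - 1) %% p)%N]modn_small //; lia.
Qed.

Let fermat : two ^+ p.-1 = 1.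
Proof. by rewrite -totient_prime // Zp_exp2_totient. Qed.

Lemma ord2_spec :
  [/\ (0 < ord2 p <= p.-1)%N, two ^+ ord2 p = 1 &
      forall j, (0 < j < ord2 p)%N -> two ^+ j != 1].
Proof.
have jP : (0 < p.-1 <= p)%N by lia.
have P1 : (2 ^ p.-1 %% p == 1 %% p)%N by rewrite exp2_mod_eq1 fermat.
have [le P min] := @find_iota1_min (fun e => 2 ^ e %% p == 1 %% p)%N p p.-1 jP P1.
split; [by rewrite /ord2 le | apply/eqP; rewrite -exp2_mod_eq1 //|].
by move=> j /min; rewrite exp2_mod_eq1.
Qed.

Lemma ord2_dvd k : two ^+ k = 1 -> (ord2 p %| k)%N.
Proof.
have [/andP[o0 _] o1 omin] := ord2_spec; rewrite /dvdn => k1.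
apply/contraT; rewrite -lt0n => r0.
by have /eqP[] := omin _ (introT andP (conj r0 (ltn_pmod k o0))); rewrite expr_mod.
Qed.

Lemma subord2_spec :
  [/\ (0 < subord2 p <= ord2 p)%N,
      (two ^+ subord2 p == 1) || (two ^+ subord2 p == -1) &
      forall j, (0 < j < subord2 p)%N -> (two ^+ j != 1) && (two ^+ j != -1)].
Proof.
have [/andP[o0 op] o1 _] := ord2_spec.
have jP : (0 < ord2 p <= p)%N by lia.
have P1 : (2 ^ ord2 p %% p == 1 %% p)%N || (2 ^ ord2 p %% p == p - 1)%N.
  by rewrite exp2_mod_eq1 o1 eqxx.
have [le P min] := @find_iota1_min
  (fun c => (2 ^ c %% p == 1 %% p) || (2 ^ c %% p == p - 1))%N p (ord2 p) jP P1.
split; [by rewrite /subord2 le | by rewrite -exp2_mod_eq1 -exp2_mod_eqN1 |].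
by move=> j /min; rewrite exp2_mod_eq1 exp2_mod_eqN1 negb_or.
Qed.

Lemma exp2_half_sign h : p = h.*2.+1 -> two ^+ h = (-1) ^+ (h - h./2).
Proof.
move=> ph; pose P := \prod_(1 <= j < h.+1) (j%:R : 'Z_p).
have P_unit : P \is a GRing.unit.
  apply: unitr_prod_in => j; rewrite mem_index_iota => /andP[j1 j2] _.
  by rewrite unitZpE // prime_coprime //; apply/negP => /(dvdn_leq j1); lia.
apply: (mulIr P_unit); transitivity (\prod_(1 <= j < h.+1) (j.*2%:R : 'Z_p)).
  rewrite (eq_bigr (fun j => two * j%:R)) => [|j _]; last by rewrite -mul2n natrM.
  by rewrite big_split /= prodr_const_nat subn1.
(* Gauss: the doubles beyond p/2 are congruent to minus the odd numbers below it *)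
rewrite (big_cat_nat (n := h./2.+1)) /=; [|lia|lia].
have -> : \prod_(h./2.+1 <= j < h.+1) (j.*2%:R : 'Z_p)
    = \prod_(h./2.+1 <= j < h.+1) (-1 * (h.*2.+1 - j.*2)%N%:R).
  apply: eq_big_nat => j /andP[j1 j2]; rewrite natrB; last by lia.
  by rewrite -ph pchar_Zp // sub0r mulN1r opprK.
rewrite big_split /= prodr_const_nat mulrCA.
have -> : (h.+1 - h./2.+1 = h - h./2)%N by lia.
congr (_ * _); rewrite /P -[RHS](perm_big _ (perm_eq_gauss h)) big_map.
rewrite [RHS](big_cat_nat (n := h./2.+1)) /=; [|lia|lia].
by congr (_ * _); apply: eq_big_nat => j /andP[j1 j2]; [rewrite ifT | rewrite ifF] => //; lia.
Qed.

Lemma exp2_half_mod8_1 : (p %% 8 = 1)%N -> two ^+ p./2 = 1.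
Proof.
move=> p8; rewrite (@exp2_half_sign p./2); last by lia.
have -> : (p./2 - p./2./2 = (p %/ 8).*2)%N by lia.
by rewrite -mul2n exprM sqrrN !expr1n.
Qed.

Lemma exp2_half_mod8_5 : (p %% 8 = 5)%N -> two ^+ p./2 = -1.
Proof.
move=> p8; rewrite (@exp2_half_sign p./2); last by lia.
have -> : (p./2 - p./2./2 = (p %/ 8).*2.+1)%N by lia.
by rewrite exprS -mul2n exprM sqrrN !expr1n mulr1.
Qed.

Lemma star_exp2_odd k : star p -> odd k -> (two ^+ k != 1) && (two ^+ k != -1).
Proof.
move=> p_star k_odd.
suff : (two ^+ k) ^+ 2 != 1.
  by move=> sq1; apply/andP; split; apply: contraNneq sq1 => ->; rewrite ?sqrrN expr1n.
rewrite -exprM muln2.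
case/orP: p_star => [/eqP p8 | /andP[_ ord4]].
  (* -1 = (-1)^k = 2^(k(p-1)/2) = (2^(2k))^((p-1)/4) *)
  apply: contra Zp_oneN1 => /eqP k1.
  have -> : (-1 : 'Z_p) = (two ^+ p./2) ^+ k by rewrite exp2_half_mod8_5 // -signr_odd k_odd.
  rewrite -[X in X == _](expr1n _ (p %/ 4)) -[X in X ^+ _ == _]k1 -!exprM.
  apply/eqP; congr (_ ^+ _).
  have -> : p./2 = (p %/ 4).*2 by lia.
  by rewrite -!mul2n mulnAC.
apply/eqP => /ord2_dvd k1; move: (dvdn_trans ord4 k1); rewrite -mul2n; lia.
Qed.

Lemma exp2_neqN1 k : ord2 p = subord2 p -> two ^+ k != -1.
Proof.
move=> os; have [/andP[o0 _] o1 _] := ord2_spec; have [_ _ smin] := subord2_spec.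
rewrite -(expr_mod k o1); have [->|r0] := posnP (k %% ord2 p); first exact: Zp_oneN1.
have lt : (k %% ord2 p < subord2 p)%N by rewrite -os ltn_pmod.
by have /andP[] := smin _ (introT andP (conj r0 lt)).
Qed.

Lemma half_odd_of_nonstar : subord2 p = ((p - 1) %/ 2)%N -> ~~ star p -> odd ((p - 1) %/ 2).
Proof.
move=> sc; have : (p %% 8 = 1 \/ p %% 8 = 5 \/ odd ((p - 1) %/ 2))%N by lia.
case=> [p8|[p8|//]]; rewrite /star p8 //=.
have [/andP[o0 _] _ _] := ord2_spec; have [/andP[_ so] _ _] := subord2_spec.
have p2_gt0 : (0 < p./2)%N by lia.
have le := dvdn_leq p2_gt0 (ord2_dvd (exp2_half_mod8_1 p8)).
have -> : ord2 p = ((p - 1) %/ 2)%N by lia.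
lia.
Qed.

Lemma exp2_inj_lt_subord2 i j : (i < subord2 p)%N -> (j < subord2 p)%N ->
  (two ^+ i = two ^+ j -> i = j) /\ two ^+ i != - two ^+ j.
Proof.
wlog ij : i j / (i <= j)%N.
  move=> wlog ic jc; have [ij|/ltnW ji] := leqP i j; first exact: wlog.
  have [inj neq] := wlog j i ji jc ic; split; first by move/esym/inj.
  by apply: contraNneq neq => ->; rewrite opprK.
move=> _ jc; have [_ _ smin] := subord2_spec.
have cancel y : two ^+ i = two ^+ i * y -> y = 1.
  have two_unitX : two ^+ i \is a GRing.unit by rewrite unitrX // Zp_two_unit.
  by rewrite -{1}(mulr1 (two ^+ i)) => /(mulrI two_unitX)/esym.
rewrite -(subnKC ij) exprD -mulrN; split.
  move/cancel/eqP => d1; suff : (j - i = 0)%N by lia.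
  apply: contraTeq d1; rewrite -lt0n => d0.
  by have /andP[] := smin (j - i)%N (introT andP (conj d0 (leq_ltn_trans (leq_subr _ _) jc))).
apply/eqP => /cancel/eqP; rewrite eqr_oppLR; have [->|d0] := posnP (j - i).
  by rewrite expr0; apply/negP; exact: Zp_oneN1.
have dc : (j - i < subord2 p)%N := leq_ltn_trans (leq_subr _ _) jc.
by have /andP[_ /negPf->] := smin (j - i)%N (introT andP (conj d0 dc)).
Qed.

Lemma Zp_pm_exp2 (u : 'Z_p) : subord2 p = ((p - 1) %/ 2)%N -> u != 0 ->
  exists2 k, (k < subord2 p)%N & (u = two ^+ k) \/ (u = - two ^+ k).
Proof.
move=> sc u0; set c := subord2 p in sc *.
pose E := [set two ^+ k | k : 'I_c]; pose NE := [set - two ^+ k | k : 'I_c].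
have inj (a b : 'I_c) := exp2_inj_lt_subord2 (ltn_ord a) (ltn_ord b).
have cardE : #|E| = c by rewrite card_imset ?card_ord // => a b /(inj a b).1 /val_inj.
have cardNE : #|NE| = c.
  by rewrite card_imset ?card_ord // => a b /oppr_inj /(inj a b).1 /val_inj.
have E_NE : E :&: NE = set0.
  apply/setP => x; rewrite !inE; apply/negP => /andP[/imsetP[a _ ->] /imsetP[b _]].
  by apply/eqP; have [] := inj a b.
have sub : E :|: NE \subset [set~ 0].
  apply/subsetP => x; rewrite !inE => /orP[]/imsetP[k _ ->]; rewrite ?oppr_eq0;
  by apply: contraTneq (unitrX k Zp_two_unit) => ->; rewrite unitr0.
have card_sub : #|E :|: NE| = #|[set~ (0 : 'Z_p)]|.
  by rewrite cardsU E_NE cards0 subn0 cardE cardNE cardsC1 card_ord Zp_cast //; lia.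
have : u \in E :|: NE by rewrite (subset_cardP card_sub sub) !inE.
by rewrite inE => /orP[]/imsetP[k _ ->]; exists k; auto.
Qed.
End Pow2ModPrime.

(** * Weight-3 equi-difference codes in Z_N *)

Section Codes.
Local Open Scope ring_scope.
Variable N' : nat.
Local Notation N := N'.+2.
Local Notation R := 'I_N.
Hypothesis N_odd : odd N.
Local Notation two := (2%:R : R).

Lemma two_unit : two \is a GRing.unit.
Proof. by rewrite (@unitZpE N) // coprime_sym coprime2n. Qed.

Lemma two_lreg : GRing.lreg two.
Proof. exact: mulrI two_unit. Qed.

Lemma mul2_eq0 (x : R) : (two * x == 0) = (x == 0).
Proof. exact: mulrI_eq0 two_lreg. Qed.

Lemma neq_oppr (x : R) : x != 0 -> x != - x.
Proof.
by move=> x0; apply: contra x0 => /eqP E; rewrite -mul2_eq0 mulr_natl mulr2n {2}E subrr.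
Qed.

Definition eqpm (x y : R) := (x == y) || (x == - y).

Lemma eqpm_refl x : eqpm x x.
Proof. by rewrite /eqpm eqxx. Qed.

Lemma eqpmNl x y : eqpm (- x) y = eqpm x y.
Proof. by rewrite /eqpm eqr_oppLR eqr_opp orbC. Qed.

Lemma eqpmNr x y : eqpm x (- y) = eqpm x y.
Proof. by rewrite /eqpm opprK orbC. Qed.

Lemma eqpm_sym x y : eqpm x y = eqpm y x.
Proof. by rewrite /eqpm [x == y]eq_sym [x == - y]eq_sym eqr_oppLR. Qed.

Lemma eqpm_trans y x z : eqpm x y -> eqpm y z -> eqpm x z.
Proof. by case/orP=> /eqP->; rewrite ?eqpmNl. Qed.

Lemma eqpm_mull u x y : eqpm x y -> eqpm (u * x) (u * y).
Proof. by case/orP=> /eqP->; rewrite ?mulrN ?eqpmNl eqpm_refl. Qed.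

Lemma eqpm_mul2 x y : eqpm (two * x) (two * y) = eqpm x y.
Proof.
by apply/idP/idP; [rewrite /eqpm -mulrN !(inj_eq two_lreg) | exact: eqpm_mull].
Qed.

Lemma eqpm_natE (a b : nat) :
  eqpm (a%:R : R) b%:R = (a == b %[mod N])%N || (N %| a + b)%N.
Proof. by rewrite /eqpm (@Zp_natE N) // (@Zp_natN N). Qed.

(* d*({0, g, 2g}) *)
Definition nzdiffs (g : R) : {set R} := [set x | eqpm x g || eqpm x (two * g)].

Lemma nzdiffs_disjoint g h : ~~ eqpm g h -> ~~ eqpm g (two * h) -> ~~ eqpm h (two * g) ->
  [disjoint nzdiffs g & nzdiffs h].
Proof.
move=> gh g2h h2g; rewrite -setI_eq0; apply/eqP/setP => x; rewrite in_setI in_set0 !inE.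
apply/negbTE/negP => /andP[/orP[] xg /orP[] xh]; rewrite eqpm_sym in xg.
- by move: gh; rewrite (eqpm_trans xg xh).
- by move: g2h; rewrite (eqpm_trans xg xh).
- by move: h2g; rewrite eqpm_sym in xh; rewrite (eqpm_trans xh) // eqpm_sym.
- by move: gh; rewrite -eqpm_mul2 (eqpm_trans xg xh).
Qed.

Definition code (g : R) : {set R} :=
  [set i : R | [exists k : 'I_3, val i == (k * val g) %% N]]%N.

Lemma code_eq g : code g = [set 0; g; two * g].
Proof.
apply/setP => i; rewrite !inE -!orbA mulr_natl.
have E (j : R) (k : nat) : (val j == k * val g %% N)%N = (j == g *+ k).
  by rewrite -val_eqE /= Zp_mulrn /= mulnC.
apply/existsP/idP => [[k]|].
  by rewrite E; case: k => [[|[|[|]]]] //= _ /eqP ->; rewrite ?eqxx ?orbT.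
by case/or3P=> /eqP->; [exists (inord 0) | exists (inord 1) | exists (inord 2)];
  rewrite E inordK.
Qed.

Lemma in_diffE (I : {set R}) (x : R) :
  in_diff I x = [exists a in I, exists b in I, a - b == x].
Proof.
apply: eq_existsb => a; congr (_ && _); apply: eq_existsb => b; congr (_ && _).
by rewrite -val_eqE /= modnDmr.
Qed.

Lemma mul2_subr g : two * g - g = g.
Proof. by rewrite mulr_natl mulr2n addrK. Qed.

Lemma subr_mul2 g : g - two * g = - g.
Proof. by rewrite -opprB mul2_subr. Qed.

Lemma in_diff_code g (x : R) : in_diff (code g) x = (x == 0) || (x \in nzdiffs g).
Proof.
rewrite in_diffE code_eq.
apply/idP/idP.
  case/exists_inP => a aI /exists_inP[b bI /eqP <-]; move: aI bI.
  rewrite !inE -!orbA => /or3P[]/eqP-> /or3P[]/eqP->;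
  by rewrite ?subrr ?subr0 ?sub0r ?mul2_subr ?subr_mul2 ?eqxx //= /eqpm ?eqxx ?opprK ?orbT.
have diff a b y : a \in [set 0; g; two * g] -> b \in [set 0; g; two * g] -> a - b = y ->
    [exists a' in [set 0; g; two * g], exists b' in [set 0; g; two * g], a' - b' == y].
  by move=> aI bI <-; apply/exists_inP; exists a => //; apply/exists_inP; exists b.
rewrite !inE /eqpm -!orbA => /orP[/eqP->|/or4P[]/eqP->].
- by apply: (diff 0 0); rewrite ?subrr // !inE eqxx.
- by apply: (diff g 0); rewrite ?subr0 // !inE eqxx ?orbT.
- by apply: (diff 0 g); rewrite ?sub0r // !inE eqxx ?orbT.
- by apply: (diff (two * g) 0); rewrite ?subr0 // !inE eqxx ?orbT.
- by apply: (diff 0 (two * g)); rewrite ?sub0r // !inE eqxx ?orbT.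
Qed.

Lemma card_code g : g != 0 -> #|code g| = 3%N.
Proof.
move=> g0; rewrite code_eq -setUA cardsU1 cards2 !inE negb_or.
have g2g : g != two * g.
  by apply: contra g0 => /eqP E; rewrite -oppr_eq0 -subr_mul2 -E subrr.
by rewrite eq_sym g0 eq_sym mul2_eq0 g0 g2g.
Qed.


Definition tiling (G A : {set R}) : Prop :=
  [/\ forall g h, g \in G -> h \in G -> g != h -> [disjoint nzdiffs g & nzdiffs h],
      forall g, g \in G -> nzdiffs g \subset A &
      forall x, x \in A -> exists2 g, g \in G & x \in nzdiffs g].

Lemma tilingU (G1 G2 A1 A2 : {set R}) : [disjoint A1 & A2] ->
  tiling G1 A1 -> tiling G2 A2 -> tiling (G1 :|: G2) (A1 :|: A2).
Proof.
move=> A12 [dis1 sub1 cov1] [dis2 sub2 cov2]; split.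
- move=> g h /setUP[] gG /setUP[] hG gh; [exact: dis1 | | | exact: dis2].
    exact: disjointW (sub1 g gG) (sub2 h hG) A12.
  by rewrite disjoint_sym; apply: disjointW (sub1 h hG) (sub2 g gG) A12.
- move=> g /setUP[] gG.
    exact: subset_trans (sub1 g gG) (subsetUl _ _).
  exact: subset_trans (sub2 g gG) (subsetUr _ _).
- move=> x /setUP[] => [/cov1|/cov2] [g gG xg]; by exists g; rewrite // inE gG ?orbT.
Qed.

Lemma CAC_of_tiling (G A : {set R}) : tiling G A -> 0 \notin A -> A != set0 ->
  exists C : {set {set R}},
    [/\ is_CAC 3 C, equi_difference 3 C & leave C = ~: (0 |: A)].
Proof.
move=> [dis sub cov] A0 An0.
have G0 g : g \in G -> g != 0.
  by move=> gG; apply: contraNneq A0 => <-; apply: (subsetP (sub g gG)); rewrite inE eqpm_refl.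
exists [set code g | g in G]; split.
- split=> [I /imsetP[g gG ->]|]; first by rewrite /in_P card_code ?G0.
  move=> I J /imsetP[g gG ->] /imsetP[h hG ->] IJ x xN x0.
  have gh : g != h by apply: contraNneq IJ => ->.
  have X0 : (Ordinal xN == 0) = false by apply/negbTE; rewrite -val_eqE /= -lt0n.
  rewrite -[x]/(val (Ordinal xN)) !in_diff_code X0 /=.
  by apply/andP => -[xg]; rewrite (disjointFr (dis g h gG hG gh) xg).
- by move=> I /imsetP[g _ ->]; exists (val g).
apply/setP => x; rewrite /leave !inE negb_or.
apply/forall_inP/andP => [no|[x0 xA] I /imsetP[g gG ->]].
  split; last first.
    by apply/negP => /cov[g gG xg]; have := no _ (imset_f code gG); rewrite in_diff_code xg orbT.
  case/set0Pn: An0 => y /cov[g gG _].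
  by apply: contraTneq (no _ (imset_f code gG)) => ->; rewrite in_diff_code eqxx.
rewrite in_diff_code negb_or x0 /=; apply: contra xA; exact: (subsetP (sub g gG)).
Qed.

Lemma CAC_of_tiling_pm (G : {set R}) v : v *+ 3 != 0 -> tiling G (~: [set 0; v; - v]) ->
  exists C : {set {set R}}, [/\ is_CAC 3 C, equi_difference 3 C & leave C = [set v; - v]].
Proof.
move=> v3 tiled; have v0 : v != 0 by apply: contraNneq v3 => ->; rewrite mul0rn.
have [||C [CAC equi leaveC]] := CAC_of_tiling tiled.
- by rewrite !inE eqxx.
- apply/set0Pn; exists (two * v); rewrite !inE mul2_eq0 (negbTE v0) /= negb_or.
  apply/andP; split; apply: contra v0 => /eqP v2.
    by rewrite -(mul2_subr v) v2 subrr.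
  by move: v3; rewrite mulrSr -mulr_natl v2 addNr eqxx.
exists C; split => //; rewrite leaveC; apply/setP => x; rewrite !inE negb_or negbK.
by case: eqVneq => [->|]; rewrite /= ?(eq_sym 0) ?oppr_eq0 ?(negbTE v0).
Qed.

Lemma eqpm_eq0 x y : eqpm x y -> (x == 0) = (y == 0).
Proof. by case/orP=> /eqP->; rewrite ?oppr_eq0. Qed.

Lemma eqpm_mulrn_eq0 x y n : eqpm x y -> (x *+ n == 0) = (y *+ n == 0).
Proof. by case/orP=> /eqP->; rewrite ?mulNrn ?oppr_eq0. Qed.

Lemma mulrn_unit_eq0 (u x : R) n : u \is a GRing.unit -> ((u * x) *+ n == 0) = (x *+ n == 0).
Proof. by move=> u_unit; rewrite -mulrnAr (mulrI_eq0 _ (mulrI u_unit)). Qed.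

Definition pos (x : R) := (val x <= val (- x))%N.

Lemma pos_eqpm g h : g != 0 -> pos g -> pos h -> eqpm g h -> g = h.
Proof.
move=> g0 pg ph /orP[/eqP //|/eqP gE]; move: g0 pg ph; rewrite gE oppr_eq0 /pos opprK.
move=> h0 hh hh'; suff hE : h = - h by move: (neq_oppr h0); rewrite -hE eqxx.
by apply: val_inj; apply/eqP; rewrite eqn_leq hh hh'.
Qed.

Definition posrep x := if pos x then x else - x.

Lemma pos_posrep x : pos (posrep x).
Proof. by rewrite /posrep; case: ifP => // /negbT; rewrite /pos opprK -ltnNge => /ltnW. Qed.

Lemma eqpm_posrep x : eqpm (posrep x) x.
Proof. by rewrite /posrep; case: ifP; rewrite ?eqpmNl eqpm_refl. Qed.

Lemma mul2_3torsion g : g *+ 3 = 0 -> two * g = - g.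
Proof. by move/eqP; rewrite mulrSr addr_eq0 mulr_natl => /eqP. Qed.

Lemma tiling_3torsion :
  tiling [set g | (g *+ 3 == 0) && (g != 0) && pos g] [set x | (x *+ 3 == 0) && (x != 0)].
Proof.
have nzdiffs3 g x : g *+ 3 = 0 -> (x \in nzdiffs g) = eqpm x g.
  by move=> g3; rewrite inE mul2_3torsion // eqpmNr orbb.
split.
- move=> g h; rewrite !inE => /andP[/andP[/eqP g3 g0] pg] /andP[/andP[/eqP h3 h0] ph] gh.
  have ngh : ~~ eqpm g h by apply: contra gh => /(pos_eqpm g0 pg ph) ->.
  by apply: nzdiffs_disjoint; rewrite ?(mul2_3torsion g3) ?(mul2_3torsion h3) ?eqpmNr // eqpm_sym.
- move=> g; rewrite inE => /andP[/andP[/eqP g3 g0] _]; apply/subsetP => x.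
  by rewrite nzdiffs3 // inE => xg; rewrite (eqpm_mulrn_eq0 3 xg) (eqpm_eq0 xg) g3 eqxx.
move=> x; rewrite inE => /andP[x3 x0]; have xr := eqpm_posrep x.
exists (posrep x); first by rewrite inE pos_posrep (eqpm_mulrn_eq0 3 xr) (eqpm_eq0 xr) x3 x0.
by rewrite nzdiffs3 1?eqpm_sym //; apply/eqP; rewrite (eqpm_mulrn_eq0 3 xr).
Qed.

Lemma two_expT : two ^+ totient N = 1.
Proof. exact: (@Zp_exp2_totient N). Qed.

Let totient_gt0 : (0 < totient N)%N. Proof. by rewrite totient_gt0. Qed.

Definition orbit_rel (x y : R) := [exists k : 'I_(totient N), eqpm y (two ^+ k * x)].

Lemma orbit_relP x y : reflect (exists k, eqpm y (two ^+ k * x)) (orbit_rel x y).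
Proof.
apply: (iffP existsP) => [[k]|[k]]; first by exists k.
by rewrite -(expr_mod k two_expT) => yk; exists (Ordinal (ltn_pmod k totient_gt0)).
Qed.

Lemma orbit_rel_refl x : orbit_rel x x.
Proof. by apply/orbit_relP; exists 0%N; rewrite expr0 mul1r eqpm_refl. Qed.

Lemma orbit_rel_trans y x z : orbit_rel x y -> orbit_rel y z -> orbit_rel x z.
Proof.
move=> /orbit_relP[a ya] /orbit_relP[b zb]; apply/orbit_relP; exists (b + a)%N.
by rewrite exprD -mulrA; apply: eqpm_trans zb (eqpm_mull _ ya).
Qed.

Lemma orbit_rel_sym x y : orbit_rel x y -> orbit_rel y x.
Proof.
case/existsP => k yk; apply/orbit_relP; exists (totient N - k)%N.
rewrite eqpm_sym; apply: eqpm_trans (eqpm_mull _ yk) _.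
by rewrite mulrA -exprD subnK ?two_expT ?mul1r ?eqpm_refl // ltnW.
Qed.

Definition orbit_rep (x : R) : R := [arg min_(y < x | orbit_rel x y) val y].

Lemma orbit_rep_rel x : orbit_rel x (orbit_rep x).
Proof. by rewrite /orbit_rep; case: arg_minnP => //; exact: orbit_rel_refl. Qed.

Lemma orbit_rep_eq x y : orbit_rel x y -> orbit_rep x = orbit_rep y.
Proof.
move=> xy; apply: val_inj; apply/eqP; rewrite eqn_leq /orbit_rep.
case: arg_minnP; first exact: orbit_rel_refl; move=> a xa amin.
case: arg_minnP; first exact: orbit_rel_refl; move=> b yb bmin.
rewrite amin ?bmin //; first exact: orbit_rel_trans (orbit_rel_sym xy) xa.
exact: orbit_rel_trans xy yb.
Qed.

(* On an orbit of y ↦ ±2y in which no odd power of 2 acts as ±1, the parity of the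
   number of doublings from the least element alternates along the orbit (colour_mul2). *)
Definition level (x : R) :=
  find (fun k => eqpm x (two ^+ k * orbit_rep x)) (iota 0 (totient N)).

Lemma level_spec x :
  [/\ (level x < totient N)%N, eqpm x (two ^+ level x * orbit_rep x) &
      forall j, (j < level x)%N -> ~~ eqpm x (two ^+ j * orbit_rep x)].
Proof.
have /existsP[k xk] := orbit_rel_sym (orbit_rep_rel x).
have hasP : has (fun k => eqpm x (two ^+ k * orbit_rep x)) (iota 0 (totient N)).
  by apply/hasP; exists (val k); rewrite // mem_iota /= add0n ltn_ord.
have lt : (level x < totient N)%N by move: hasP; rewrite has_find size_iota.
split => //; first by have := nth_find 0%N hasP; rewrite nth_iota // add0n.
by move=> j jk; have := before_find 0%N jk; rewrite nth_iota ?add0n //; lia.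
Qed.

Definition colour (x : R) := odd (level x).

Lemma colour_eqpm x y : eqpm x y -> colour x = colour y.
Proof.
move=> xy; have E : orbit_rep x = orbit_rep y.
  by apply/orbit_rep_eq/orbit_relP; exists 0%N; rewrite expr0 mul1r eqpm_sym.
rewrite /colour /level E; congr odd; apply: eq_find => k.
by apply/idP/idP; apply: eqpm_trans; rewrite // eqpm_sym.
Qed.

Lemma colour_mul2 x :
  (forall k, odd k -> ~~ eqpm (two ^+ k * orbit_rep x) (orbit_rep x)) ->
  colour (two * x) = ~~ colour x.
Proof.
move=> free; have [alt Pa amin] := level_spec x; have [blt Pb bmin] := level_spec (two * x).
have r2 : orbit_rep (two * x) = orbit_rep x.
  by apply/esym/orbit_rep_eq/orbit_relP; exists 1%N; rewrite expr1 eqpm_refl.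
rewrite r2 in Pb bmin; rewrite /colour.
move: (orbit_rep x) (level x) (level (two * x)) free alt Pa amin blt Pb bmin.
move=> r a b free alt Pa amin blt Pb bmin.
have Pa1 : eqpm (two * x) (two ^+ a.+1 * r) by rewrite exprS -mulrA eqpm_mul2.
have [b0|b_gt0] := posnP b.
  (* the orbit closes up at [a.+1], which must then be even *)
  rewrite b0 /=; apply/esym/negbF; apply: contraT => a_even.
  move: (free a.+1 a_even); rewrite eqpm_sym in Pa1.
  by rewrite (eqpm_trans Pa1) //; move: Pb; rewrite b0 expr0 mul1r.
have Pb1 : eqpm x (two ^+ b.-1 * r) by rewrite -eqpm_mul2 mulrA -exprS prednK.
have ab : (a <= b.-1)%N by rewrite leqNgt; apply/negP => /amin; rewrite Pb1.
have [a1T|a1T] := ltnP a.+1 (totient N).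
  have ba : (b <= a.+1)%N by rewrite leqNgt; apply/negP => /bmin; rewrite Pa1.
  by have -> : b = a.+1 by lia.
have aT : a.+1 = totient N by lia.
by move: (bmin 0%N b_gt0); rewrite expr0 mul1r; rewrite aT two_expT mul1r in Pa1; rewrite Pa1.
Qed.

Lemma tiling_colour (S : {set R}) :
  (forall x y, x \in S -> eqpm y x -> y \in S) -> (forall x, x \in S -> two * x \in S) ->
  (forall x k, x \in S -> odd k -> ~~ eqpm (two ^+ k * x) x) ->
  tiling [set g in S | ~~ colour g && pos g] S.
Proof.
move=> S_eqpm S2 free.
have SX k x : x \in S -> two ^+ k * x \in S.
  by elim: k => [|k IH] xS; rewrite ?expr0 ?mul1r // exprS -mulrA S2 ?IH.
have col2 x : x \in S -> colour (two * x) = ~~ colour x.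
  move=> xS; apply: colour_mul2 => k; apply: free.
  by have /orbit_relP[k' rk] := orbit_rep_rel x; apply: S_eqpm rk; apply: SX.
split.
- move=> g h; rewrite !inE => /and3P[gS cg pg] /and3P[hS ch ph] gh.
  have g0 : g != 0 by apply: contraTneq (free g 1%N gS isT) => ->; rewrite mulr0 eqpm_refl.
  apply: nzdiffs_disjoint.
  + by apply: contra gh => /(pos_eqpm g0 pg ph) ->.
  + by apply: contra cg => /colour_eqpm ->; rewrite col2.
  + by apply: contra ch => /colour_eqpm ->; rewrite col2.
- move=> g; rewrite inE => /andP[gS _]; apply/subsetP => x; rewrite inE.
  by case/orP => /S_eqpm; apply; rewrite ?S2.
move=> x xS; have [cx|cx] := boolP (colour x); last first.
  exists (posrep x); last by rewrite inE (eqpm_sym x) eqpm_posrep.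
  by rewrite inE (S_eqpm x) ?eqpm_posrep // (colour_eqpm (eqpm_posrep x)) cx pos_posrep.
(* [x] is the double of [y := 2^(φ(N)-1) x], whose colour is the opposite one *)
pose y := two ^+ (totient N).-1 * x.
have xy : x = two * y by rewrite /y mulrA -exprS prednK // two_expT mul1r.
have yS : y \in S by apply: SX.
exists (posrep y); last by rewrite inE xy eqpm_mul2 (eqpm_sym y) eqpm_posrep orbT.
rewrite inE (S_eqpm y) ?eqpm_posrep // (colour_eqpm (eqpm_posrep y)) pos_posrep andbT.
by move: cx; rewrite xy col2 // => /negbNE ->.
Qed.

Definition pow2_orbit (v : R) c : {set R} := [set x | [exists k : 'I_c, eqpm x (two ^+ k * v)]].

Lemma tiling_pow2_orbit (v : R) c : odd c ->
  (forall i j x, (i < c)%N -> (j < c)%N ->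
     eqpm x (two ^+ i * v) -> eqpm x (two ^+ j * v) -> i = j) ->
  tiling [set two ^+ i * v | i : 'I_c & odd i] (pow2_orbit v c :\: [set v; - v]).
Proof.
move=> c_odd uniq_exp.
have nzdiffsX i x : (x \in nzdiffs (two ^+ i * v)) =
    eqpm x (two ^+ i * v) || eqpm x (two ^+ i.+1 * v).
  by rewrite inE exprS mulrA.
have eqpm_v x : eqpm x v = eqpm x (two ^+ 0 * v) by rewrite expr0 mul1r.
split.
- move=> _ _ /imsetP[i oi ->] /imsetP[j oj ->] ij; move: oi oj; rewrite !inE => oi oj.
  rewrite -setI_eq0; apply/eqP/setP => x; rewrite in_setI !nzdiffsX in_set0.
  apply/negbTE/negP => /andP[xi xj]; move: ij; suff -> : i = j by rewrite eqxx.
  have [ic jc] := (ltn_ord i, ltn_ord j); apply: ord_inj.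
  by case/orP: xi => xi; case/orP: xj => xj; have := uniq_exp _ _ _ _ _ xi xj; lia.
- move=> _ /imsetP[i oi ->]; move: oi; rewrite inE => oi; apply/subsetP => x.
  rewrite nzdiffsX in_setD !inE -/(eqpm x v) => xi.
  have [a /andP[a0 ac] xa] : exists2 a, (0 < a < c)%N & eqpm x (two ^+ a * v).
    by have ic := ltn_ord i; case/orP: xi => xi; [exists i | exists i.+1]; rewrite ?xi //; lia.
  apply/andP; split; last by apply/existsP; exists (Ordinal ac).
  apply/negP => xv; rewrite eqpm_v in xv.
  by have := uniq_exp a 0%N x ac (leq_ltn_trans (leq0n a) ac) xa xv; lia.
move=> x; rewrite in_setD !inE -/(eqpm x v) => /andP[xv /existsP[k xk]].
have k0 : (0 < k)%N.
  by rewrite lt0n; apply: contraNneq xv => k0; move: xk; rewrite k0 expr0 mul1r.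
have [ok|ek] := boolP (odd k).
  by exists (two ^+ k * v); [apply/imsetP; exists k; rewrite ?inE | rewrite nzdiffsX xk].
have kc : (k.-1 < c)%N by have := ltn_ord k; lia.
exists (two ^+ k.-1 * v); first by apply/imsetP; exists (Ordinal kc); rewrite ?inE //=; lia.
by rewrite nzdiffsX prednK // xk orbT.
Qed.

Definition gd (x : R) := gcdn (val x) N.

Lemma gdN x : gd (- x) = gd x.
Proof.
rewrite /gd /= gcdn_modl; have xN : (val x <= N)%N by apply/ltnW/ltn_ord.
have E1 : gcdn (N - x) N = gcdn (N - x) x by rewrite -(gcdnDl (N - x) x) subnK.
have E2 : gcdn x N = gcdn x (N - x) by rewrite -(gcdnDl x (N - x)) subnKC.
by rewrite E1 E2 gcdnC.
Qed.

Lemma gd_mul2 x : gd (two * x) = gd x.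
Proof.
rewrite /gd /= gcdn_modl [LHS]gcdnC Gauss_gcdr; first by rewrite gcdnC.
by rewrite coprime_modr coprime_sym coprime2n.
Qed.

Lemma gdX k x : gd (two ^+ k * x) = gd x.
Proof. by elim: k => [|k IH]; rewrite ?expr0 ?mul1r // exprS -mulrA gd_mul2. Qed.

Lemma gd_eqpm x y : eqpm x y -> gd x = gd y.
Proof. by case/orP=> /eqP->; rewrite ?gdN. Qed.

Lemma CAC_of_pow2_orbit (v : R) c : odd c -> v *+ 3 != 0 ->
  (forall x, gd x = gd v -> exists2 k, (k < c)%N & eqpm x (two ^+ k * v)) ->
  (forall i j x, (i < c)%N -> (j < c)%N ->
     eqpm x (two ^+ i * v) -> eqpm x (two ^+ j * v) -> i = j) ->
  (forall x k, x *+ 3 != 0 -> gd x != gd v -> odd k -> ~~ eqpm (two ^+ k * x) x) ->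
  exists C : {set {set R}}, [/\ is_CAC 3 C, equi_difference 3 C & leave C = [set v; - v]].
Proof.
move=> c_odd v3 gd_orbit uniq_exp free.
have orbitE : pow2_orbit v c = [set x | gd x == gd v].
  apply/setP => x; rewrite !inE; apply/existsP/eqP => [[k xk]|/gd_orbit[k kc xk]].
    by rewrite (gd_eqpm xk) gdX.
  by exists (Ordinal kc).
have orbit3 x : gd x = gd v -> x *+ 3 != 0.
  by case/gd_orbit => k _ xk; rewrite (eqpm_mulrn_eq0 3 xk) mulrn_unit_eq0 // unitrX // two_unit.
pose S : {set R} := [set x | (x *+ 3 != 0) && (gd x != gd v)].
pose T3 : {set R} := [set x | (x *+ 3 == 0) && (x != 0)].
pose O := pow2_orbit v c :\: [set v; - v].
have S_tiled : tiling [set g in S | ~~ colour g && pos g] S.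
  apply: tiling_colour => [x y|x|x k].
  - by rewrite !inE => /andP[x3 xv] yx; rewrite (eqpm_mulrn_eq0 3 yx) (gd_eqpm yx) x3.
  - by rewrite !inE (mulrn_unit_eq0 _ _ two_unit) gd_mul2.
  - by rewrite inE => /andP[x3 xv]; apply: free.
have disj_SO : [disjoint S & O].
  rewrite -setI_eq0; apply/eqP/setP => x; rewrite /S /O orbitE !inE.
  by case: (gd x == gd v); rewrite ?andbF.
have disj_3 : [disjoint S :|: O & T3].
  rewrite -setI_eq0; apply/eqP/setP => x; rewrite /S /O /T3 orbitE !inE.
  case: (boolP (gd x == gd v)) => [/eqP/orbit3/negPf -> | _]; rewrite /= ?andbF //.
  by case: (x *+ 3 == 0); rewrite ?andbF.
have tiled := tilingU disj_3 (tilingU disj_SO S_tiled (tiling_pow2_orbit c_odd uniq_exp))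
  tiling_3torsion.
have A_eq : S :|: O :|: T3 = ~: [set 0; v; - v].
  apply/setP => x; rewrite /S /O /T3 orbitE !inE.
  have [x3|x3] := boolP (x *+ 3 == 0).
    have gxv : gd x != gd v by apply: contraL x3 => /eqP/orbit3.
    have xv : (x == v) = false by apply: contraTF x3 => /eqP->.
    have xNv : (x == - v) = false by apply: contraTF x3 => /eqP->; rewrite mulNrn oppr_eq0.
    by rewrite xv xNv (negbTE gxv) /= !orbF.
  have x0 : (x == 0) = false by apply: contraNF x3 => /eqP->; rewrite mul0rn.
  have [gxv|gxv] := eqVneq (gd x) (gd v); rewrite x0 /= ?gxv ?eqxx ?andbT ?orbF //.
  have xv : (x == v) = false by apply: contraNF gxv => /eqP->.
  have xNv : (x == - v) = false by apply: contraNF gxv => /eqP->; rewrite gdN.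
  by rewrite xv xNv.
by apply: CAC_of_tiling_pm v3 _; rewrite -A_eq; exact: tiled.
Qed.

End Codes.

(** * Codes from an exceptional divisor of N *)

Lemma dvdn_div_gcd N a m : 0 < N -> N %| m * a -> N %/ gcdn a N %| m.
Proof.
move=> N0 Nma; set d := gcdn a N.
have d0 : 0 < d by rewrite gcdn_gt0 N0 orbT.
have Nd : N = N %/ d * d by rewrite divnK // dvdn_gcdr.
have ad : a = a %/ d * d by rewrite divnK // dvdn_gcdl.
have co : coprime (N %/ d) (a %/ d).
  by rewrite /coprime -(eqn_pmul2r d0) mul1n muln_gcdl -Nd -ad gcdnC.
by rewrite -(Gauss_dvdl _ co) -(dvdn_pmul2r d0) -mulnA -ad -Nd.
Qed.

Definition pm_pow2_transversal (n0 c : nat) : Prop :=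
  [/\ odd c,
      forall j, 0 < j < c -> ~~ (n0 %| 2 ^ j - 1) && ~~ (n0 %| 2 ^ j + 1) &
      forall u, 0 < u < n0 -> coprime u n0 ->
        exists2 k, k < c & (u == 2 ^ k %[mod n0]) || (n0 %| u + 2 ^ k)].

Definition pow2_pm1_divisors (L n0 : nat) : Prop :=
  forall n, n %| L -> forall k, odd k ->
    (n %| 2 ^ k - 1) || (n %| 2 ^ k + 1) -> [\/ n = 1, n = 3 | n = n0].

Definition tight_equidiff_CAC (L : nat) (C : {set {set 'I_L}}) : Prop :=
  [/\ is_CAC 3 C, equi_difference 3 C, #|leave C| = 2 &
      ~ (3 %| L /\ forall x : 'I_L,
           (x \in leave C) = ((val x == L %/ 3) || (val x == 2 * (L %/ 3))))].

Section ExceptionalDivisor.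
Local Open Scope ring_scope.
Variables (N' n0 c : nat).
Local Notation N := N'.+2.
Local Notation R := 'I_N.
Local Notation two := (2%:R : R).
Hypotheses (N_odd : odd N) (n0_dvd : (n0 %| N)%N) (n0_gt3 : (3 < n0)%N).

(* The leave will be {±v}. *)
Let v0 := (N %/ n0)%N.
Let v : R := v0%:R.

Let N_eq : N = (n0 * v0)%N. Proof. by rewrite /v0 mulnC divnK. Qed.
Let v0_gt0 : (0 < v0)%N. Proof. by move: N_eq; case: v0 => //; rewrite muln0. Qed.
Let val_v : val v = v0.
Proof. by have := @val_Zp_nat N isT v0; rewrite modn_small // N_eq; nia. Qed.
Let gd_v : gd v = v0.
Proof. by rewrite /gd val_v; apply/gcdn_idPl; rewrite N_eq dvdn_mull. Qed.

Lemma v_mul3_neq0 : v *+ 3 != 0.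
Proof.
have -> : v *+ 3 = (v0 * 3)%N%:R by rewrite natrM mulr_natr.
rewrite (@Zp_nat_eq0 N) //; apply/negP => /(dvdn_leq _).
by rewrite muln_gt0 v0_gt0 => /(_ isT); rewrite {1}N_eq; nia.
Qed.


Lemma gd_orbit_of_units :
  (forall u, (0 < u < n0)%N -> coprime u n0 ->
     exists2 k, (k < c)%N & (u == 2 ^ k %[mod n0])%N || (n0 %| u + 2 ^ k)%N) ->
  forall x : R, gd x = gd v -> exists2 k, (k < c)%N & eqpm x (two ^+ k * v).
Proof.
move=> units x; rewrite gd_v => gx; set a := val x.
have va : (v0 %| a)%N by rewrite -gx dvdn_gcdl.
set u := (a %/ v0)%N; have au : a = (u * v0)%N by rewrite divnK.
have un : (u < n0)%N by rewrite -(ltn_pmul2r v0_gt0) -au -N_eq; apply: ltn_ord.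
have cu : coprime u n0.
  by rewrite /coprime -(eqn_pmul2r v0_gt0) mul1n muln_gcdl -au -N_eq; apply/eqP.
have u0 : (0 < u)%N by rewrite lt0n; apply: contraTneq cu => ->; rewrite /coprime gcd0n; lia.
have [k kc hk] := units u (introT andP (conj u0 un)) cu; exists k => //.
rewrite -[x]natr_Zp -/a /v -natrX -natrM eqpm_natE au N_eq.
by rewrite -!muln_modl eqn_pmul2r // -mulnDl dvdn_pmul2r.
Qed.

Lemma uniq_exp_of_pow2 :
  (forall j, (0 < j < c)%N -> ~~ (n0 %| 2 ^ j - 1)%N && ~~ (n0 %| 2 ^ j + 1)%N) ->
  forall i j x, (i < c)%N -> (j < c)%N ->
    eqpm x (two ^+ i * v) -> eqpm x (two ^+ j * v) -> i = j.
Proof.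
move=> distinct; suff key i j : (i < j < c)%N -> ~~ eqpm (two ^+ i * v) (two ^+ j * v).
  move=> i j x ic jc xi xj; have ij : eqpm (two ^+ i * v) (two ^+ j * v).
    by apply: eqpm_trans xj; rewrite eqpm_sym.
  have [lt|gt|//] := ltngtP i j; first by move: (key i j); rewrite lt jc ij => /(_ isT).
  by move: (key j i); rewrite gt ic eqpm_sym ij => /(_ isT).
move=> /andP[ij jc]; have co2 : coprime n0 (2 ^ i).
  by rewrite coprimeXr // coprimen2; move: N_odd; rewrite N_eq oddM => /andP[].
have ji : (2 ^ j = 2 ^ i * 2 ^ (j - i))%N by rewrite -expnD subnKC // ltnW.
have /andP[not_m1 not_p1] := distinct (j - i)%N ltac:(lia).
rewrite /v -!natrX -!natrM eqpm_natE negb_or; apply/andP; split.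
  rewrite eq_sym eqn_mod_dvd; last by rewrite leq_mul2r leq_exp2l // (ltnW ij) orbT.
  by rewrite -mulnBl ji -{2}[(2 ^ i)%N]muln1 -mulnBr N_eq dvdn_pmul2r // Gauss_dvdr.
by rewrite -mulnDl ji -{1}[(2 ^ i)%N]muln1 -mulnDr N_eq dvdn_pmul2r // Gauss_dvdr // addnC.
Qed.

Lemma free_of_divisors :
  (forall n, (n %| N)%N -> forall k, odd k ->
     (n %| 2 ^ k - 1)%N || (n %| 2 ^ k + 1)%N -> [\/ n = 1%N, n = 3%N | n = n0]) ->
  forall x k, x *+ 3 != 0 -> gd x != gd v -> odd k -> ~~ eqpm (two ^+ k * x) x.
Proof.
(* If 2^k x = ±x then N / gcd(x, N) divides 2^k ∓ 1, so it is 1, 3 or n0. *)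
move=> divisors x k x3 gx k_odd; rewrite gd_v in gx.
have {}x3 : ~~ (N %| val x * 3)%N.
  have E : x *+ 3 = (val x * 3)%N%:R by rewrite natrM mulr_natr natr_Zp.
  by rewrite E (@Zp_nat_eq0 N) in x3.
rewrite -[x]natr_Zp -natrX -natrM eqpm_natE; set a := val x in x3 gx *.
rewrite /gd -/a in gx; set d := gcdn a N in gx.
have d_gt0 : (0 < d)%N by rewrite gcdn_gt0 orbT.
have Nd : N = (N %/ d * d)%N by rewrite divnK // dvdn_gcdr.
apply/negP => H; have : (N %/ d %| 2 ^ k - 1)%N || (N %/ d %| 2 ^ k + 1)%N.
  case/orP: H => H; apply/orP; [left|right]; apply: dvdn_div_gcd => //.
    by move: H; rewrite eqn_mod_dvd ?mulnBl ?mul1n // leq_pmull // expn_gt0.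
  by rewrite mulnDl mul1n.
have : (N %/ d %| N)%N by rewrite {2}Nd dvdn_mulr.
move=> /divisors/(_ k k_odd) /[apply] -[] E.
- by move: x3; rewrite {1}Nd E mul1n dvdn_mulr // dvdn_gcdl.
- by move: x3; rewrite {1}Nd E mulnC dvdn_pmul2r // dvdn_gcdl.
move: gx; have : (n0 * d = n0 * v0)%N by rewrite -N_eq -E divnK // dvdn_gcdr.
by move/eqP; rewrite eqn_pmul2l ?(ltn_trans _ n0_gt3) // => /eqP->; rewrite eqxx.
Qed.

Lemma exceptional_divisor_tight_CAC :
  pm_pow2_transversal n0 c -> pow2_pm1_divisors N n0 ->
  exists C : {set {set R}}, tight_equidiff_CAC C.
Proof.
move=> [c_odd distinct units] divisors.
have [C [CAC equi leaveC]] := CAC_of_pow2_orbit N_odd c_odd v_mul3_neq0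
  (gd_orbit_of_units units) (uniq_exp_of_pow2 distinct) (free_of_divisors divisors).
have v_neq0 : v != 0 by apply: contraNneq v_mul3_neq0 => ->; rewrite mul0rn.
exists C; split => //; first by rewrite leaveC cards2 neq_oppr.
move=> [N3 leave3]; have := leave3 v; rewrite leaveC !inE eqxx val_v.
have q3 : (N %/ 3 * 3 = N)%N by rewrite divnK.
by move/esym => /orP[] /eqP E; move: q3; rewrite N_eq E; nia.
Qed.
End ExceptionalDivisor.

Lemma star_odd q : star q -> odd q.
Proof. by case/orP=> [|/andP[]] /eqP q8; lia. Qed.

Lemma star_ndvd_pow2_pm1 q k : prime q -> star q -> odd k ->
  ~~ (q %| 2 ^ k - 1) && ~~ (q %| 2 ^ k + 1).
Proof.
move=> q_pr q_star k_odd.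
by rewrite -exp2_eq1 -?exp2_eqN1 ?star_exp2_odd // star_odd.
Qed.

Lemma three_ndvd_pow2_odd k : odd k -> ~~ (3 %| 2 ^ k - 1).
Proof.
move=> k_odd; rewrite -(@exp2_eq1 3) //.
have -> : (2%:R : 'Z_3)%R = (-1)%R by apply/val_inj.
by rewrite -signr_odd k_odd expr1 eq_sym; apply: Zp_oneN1.
Qed.

Lemma exceptional_prime_data q : prime q -> odd q -> ~~ star q ->
  subord2 q = (q - 1) %/ 2 ->
  pm_pow2_transversal q ((q - 1) %/ 2).
Proof.
move=> q_pr q_odd q_nstar sq; have q_gt1 := prime_gt1 q_pr.
split; first exact: half_odd_of_nonstar.
  have [_ _ smin] := subord2_spec q_pr q_odd.
  by move=> j; rewrite -sq => /smin; rewrite exp2_eq1 // exp2_eqN1.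
move=> u /andP[u0 uq] _; have u_neq0 : (u%:R : 'Z_q)%R != 0%R.
  by rewrite Zp_nat_eq0 //; apply/negP => /(dvdn_leq u0); lia.
have [k kc uk] := Zp_pm_exp2 q_pr q_odd sq u_neq0; exists k; first by rewrite -sq.
by case: uk => /eqP; rewrite -natrX ?Zp_natE ?Zp_natN // => ->; rewrite ?orbT.
Qed.

Section PrimeFactorization.
Variables (m : nat) (p r : nat -> nat).
Hypothesis p_prime : forall i, i < m -> prime (p i).

Lemma star_prod (P : pred nat) : (forall i, i < m -> P i -> star (p i)) ->
  forall q, prime q -> q %| \prod_(i < m | P i) p i ^ r i -> star q.
Proof.
move=> Pstar q q_pr; apply: (big_ind (fun x => q %| x -> star q)) => [|x y Hx Hy|i Pi].
- by rewrite dvdn1 => /eqP q1; move: q_pr; rewrite q1.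
- by rewrite Euclid_dvdM // => /orP[/Hx|/Hy].
rewrite Euclid_dvdX // => /andP[qpi _]; suff -> : q = p i by apply: Pstar.
by apply/eqP; rewrite -dvdn_prime2 ?p_prime.
Qed.

End PrimeFactorization.

Lemma pow2_pm1_dvd_cofactor L A M n k : L = A * M -> 0 < L ->
  (forall q, prime q -> q %| M -> star q) ->
  n %| L -> odd k -> (n %| 2 ^ k - 1) || (n %| 2 ^ k + 1) -> n %| A.
Proof.
move=> LAM L0 M_star nL k_odd n_dvd.
suff co : coprime n M by rewrite -(Gauss_dvdl _ co) -LAM.
have M0 : 0 < M by move: L0; rewrite LAM muln_gt0 => /andP[].
apply/contraT => nco; have g_gt1 : 1 < gcdn n M.
  by move: nco; rewrite /coprime; have := gcdn_gt0 n M; rewrite M0 orbT; lia.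
set q := pdiv (gcdn n M); have q_pr : prime q by apply: pdiv_prime.
have qn : q %| n := dvdn_trans (pdiv_dvd _) (dvdn_gcdl n M).
have qM : q %| M := dvdn_trans (pdiv_dvd _) (dvdn_gcdr n M).
have /andP[/negP qm1 /negP qp1] := star_ndvd_pow2_pm1 q_pr (M_star q q_pr qM) k_odd.
by case/orP: n_dvd => /(dvdn_trans qn).
Qed.

Lemma CAC_of_exceptional_divisor L n0 c : odd L -> n0 %| L -> 3 < n0 ->
  pm_pow2_transversal n0 c -> pow2_pm1_divisors L n0 ->
  exists C : {set {set 'I_L}}, tight_equidiff_CAC C.
Proof.
case: L => [|[|N']] // L_odd n0_dvd n0_gt3; last exact: exceptional_divisor_tight_CAC.
by move: n0_dvd n0_gt3; rewrite dvdn1 => /eqP->.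
Qed.

Lemma pm_pow2_transversal_9 : pm_pow2_transversal 9 3.
Proof.
split=> // [[|[|[|j]]] //|u /andP[u0 u9] cu].
by case: u u0 u9 cu => [|[|[|[|[|[|[|[|[|u]]]]]]]]] //= _ _ _;
  first [by exists 0 | by exists 1 | by exists 2].
Qed.

Section Cases.
Variables (L m : nat) (p r : nat -> nat).
Hypotheses (m_gt0 : 0 < m) (p_prime : forall i, i < m -> prime (p i))
  (p_incr : forall i j, i < j -> j < m -> p i < p j) (r_gt0 : forall i, i < m -> 0 < r i)
  (L_def : L = \prod_(i < m) p i ^ r i) (L_odd : odd L).

Let L_gt0 : 0 < L. Proof. by case: L L_odd. Qed.

Let p_odd i : i < m -> odd (p i).
Proof.
move=> im; apply: dvdn_odd L_odd; rewrite L_def (bigD1 (Ordinal im)) //= dvdn_mulr //.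
by rewrite dvdn_exp // r_gt0.
Qed.

Let p0_le t : t < m -> p 0 <= p t.
Proof. by case: t => // t tm; apply/ltnW/p_incr. Qed.

Lemma CAC_case_a t : 3 < p 0 -> t < m ->
  subord2 (p t) = (p t - 1) %/ 2 -> r t = 1 -> ~~ star (p t) ->
  (forall i, i < m -> i != t -> star (p i)) ->
  exists C : {set {set 'I_L}}, tight_equidiff_CAC C.
Proof.
move=> p0_gt3 tm sq rt nstar others; have pt_pr := p_prime tm.
have pt_gt3 : 3 < p t by have := p0_le tm; lia.
have L_eq : L = p t * \prod_(i < m | (i : nat) != t) p i ^ r i.
  by rewrite L_def (bigD1 (Ordinal tm)) //= rt expn1.
apply: (CAC_of_exceptional_divisor L_odd _ pt_gt3
  (exceptional_prime_data pt_pr (p_odd tm) nstar sq)); first by rewrite L_eq dvdn_mulr.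
move=> n nL k k_odd nk.
have := pow2_pm1_dvd_cofactor L_eq L_gt0 (star_prod p_prime others) nL k_odd nk.
by case/primeP: pt_pr => _ dvd_pt /dvd_pt/orP[]/eqP->; [constructor 1 | constructor 3].
Qed.

Lemma CAC_case_b t : p 0 = 3 -> r 0 = 1 -> 0 < t < m ->
  subord2 (p t) = (p t - 1) %/ 2 -> ord2 (p t) = (p t - 1) %/ 2 -> r t = 1 ->
  ~~ star (p t) -> (forall i, 0 < i < m -> i != t -> star (p i)) ->
  exists C : {set {set 'I_L}}, tight_equidiff_CAC C.
Proof.
move=> p0 r0 /andP[t0 tm] sq oq rt nstar others; have pt_pr := p_prime tm.
have pt_gt3 : 3 < p t by rewrite -p0; apply: p_incr.
pose M := \prod_(i < m | ((i : nat) != 0) && ((i : nat) != t)) p i ^ r i.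
have L_eq : L = 3 * p t * M.
  rewrite L_def (bigD1 (Ordinal m_gt0)) //= (bigD1 (Ordinal tm)) /=; last first.
    by rewrite -val_eqE /=; lia.
  by rewrite p0 r0 rt !expn1 mulnA /M; congr (_ * _).
have M_star : forall q, prime q -> q %| M -> star q.
  apply: (star_prod p_prime (P := fun i => (i != 0) && (i != t))) => i im /andP[i0 it].
  by apply: others; rewrite // lt0n i0.
apply: (CAC_of_exceptional_divisor L_odd _ pt_gt3
  (exceptional_prime_data pt_pr (p_odd tm) nstar sq)).
  by rewrite L_eq -mulnA dvdn_mull ?dvdn_mulr.
move=> n nL k k_odd nk; have n_dvd := pow2_pm1_dvd_cofactor L_eq L_gt0 M_star nL k_odd nk.
(* Odd k: 3 does not divide 2^k - 1, and p t never divides 2^k + 1 as ord2 = subord2. *)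
case/orP: nk => nk.
  have n3 : coprime n 3.
    rewrite coprime_sym prime_coprime //; apply/negP => three_n.
    by have := three_ndvd_pow2_odd k_odd; rewrite (dvdn_trans three_n nk).
  move: n_dvd; rewrite Gauss_dvdr //.
  by case/primeP: pt_pr => _ dvd_pt /dvd_pt/orP[]/eqP->; [constructor 1 | constructor 3].
have npt : coprime n (p t).
  rewrite coprime_sym prime_coprime //; apply/negP => ptn.
  have := exp2_neqN1 pt_pr (p_odd tm) k (etrans oq (esym sq)).
  by rewrite exp2_eqN1 // (dvdn_trans ptn nk).
move: n_dvd; rewrite Gauss_dvdl //.
by case/primeP: (isT : prime 3) => _ dvd3 /dvd3/orP[]/eqP->; [constructor 1 | constructor 2].
Qed.

Lemma CAC_case_c : p 0 = 3 -> r 0 = 2 -> (forall i, 0 < i < m -> star (p i)) ->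
  exists C : {set {set 'I_L}}, tight_equidiff_CAC C.
Proof.
move=> p0 r0 others.
pose M := \prod_(i < m | (i : nat) != 0) p i ^ r i.
have L_eq : L = 9 * M.
  by rewrite L_def (bigD1 (Ordinal m_gt0)) //= p0 r0 /M; congr (_ * _).
have M_star : forall q, prime q -> q %| M -> star q.
  by apply: (star_prod p_prime (P := fun i => i != 0)) => i im i0; apply: others; rewrite lt0n i0.
apply: (CAC_of_exceptional_divisor L_odd _ _ pm_pow2_transversal_9) => //.
  by rewrite L_eq dvdn_mulr.
move=> n nL k k_odd nk; have n_dvd9 := pow2_pm1_dvd_cofactor L_eq L_gt0 M_star nL k_odd nk.
have := dvdn_leq (isT : 0 < 9) n_dvd9; move: n_dvd9.
by case: n {nL nk} => [|[|[|[|[|[|[|[|[|[|n]]]]]]]]]] //= _ _; constructor.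
Qed.
End Cases.

Theorem mainTheorem12 (L m : nat) (p r : nat -> nat)
  (Hm : 0 < m)
  (Hprime : forall i, i < m -> prime (p i))
  (Hincr : forall i j, i < j -> j < m -> p i < p j)
  (Hr : forall i, i < m -> 0 < r i)
  (HL : L = \prod_(i < m) p i ^ r i)
  (Hodd : odd L) :
  [\/ (3 < p 0 /\
       exists2 t, t < m &
         [/\ subord2 (p t) = (p t - 1) %/ 2, r t = 1, ~~ star (p t) &
             forall i, i < m -> i != t -> star (p i)]),
      (p 0 = 3 /\ r 0 = 1 /\
       exists2 t, 1 <= t < m &
         [/\ subord2 (p t) = (p t - 1) %/ 2, ord2 (p t) = (p t - 1) %/ 2,
             r t = 1, ~~ star (p t) &
             forall i, 1 <= i < m -> i != t -> star (p i)])
    | (p 0 = 3 /\ r 0 = 2 /\ forall i, 1 <= i < m -> star (p i))] ->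
  exists C : {set {set 'I_L}},
    [/\ is_CAC 3 C, equi_difference 3 C, #|leave C| = 2 &
        ~ (3 %| L /\
           forall x : 'I_L, (x \in leave C) = ((val x == L %/ 3) || (val x == 2 * (L %/ 3))))].
Proof.
case=> [[p0 [t tm [sq rt nstar others]]]
       |[p0 [r0 [t tm [sq oq rt nstar others]]]]
       |[p0 [r0 others]]].
- exact: (CAC_case_a Hm Hprime Hincr Hr HL Hodd p0 tm sq rt nstar others).
- exact: (CAC_case_b Hm Hprime Hincr Hr HL Hodd p0 r0 tm sq oq rt nstar others).
- exact: (CAC_case_c Hm Hprime HL Hodd p0 r0 others).
Qed.
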